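(* Let $G$ be a digraph and let $r_1,r_2$ be positive integers with $r_1+r_2\ge \Delta_{max}(G)\ge 1$. If $(V_1,V_2)$ is an $(r_1,r_2)$-normal partition of $V(G)$, then $G[V_1]$ is $r_1$-special and $G[V_2]$ is $r_2$-special.
   Context: Digraphs have no loops and no parallel arcs, but may contain digons. $d_{min}(v)=\min(d^+(v),d^-(v))$, $d_{max}(v)=\max(d^+(v),d^-(v))$, $\Delta_{max}(G)=\max_v d_{max}(v)$. A digraph $H$ is $r$-special if for every vertex $v$ of $H$, either $d_{min}(v)<r$ or $d^+(v)=d^-(v)=r$ (degrees in $H$). For positive integers $r_1,r_2$, a partition $(V_1,V_2)$ of $V(G)$ is $(r_1,r_2)$-normal if it minimizes $r_2|A(G[V_1])|+r_1|A(G[V_2])|$ over all partitions of $V(G)$ into two parts, where $A(\cdot)$ denotes the arc set. *)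

(* A digraph on a finite vertex type T is given by its arc
   relation a : rel T; a rel has no parallel arcs, digons (a x y && a y x)
   are allowed, and loops are excluded by the hypothesis irreflexive a. *)
From mathcomp Require Import all_boot.
Set Implicit Arguments. Unset Strict Implicit. Unset Printing Implicit Defensive.

Section Digraph.
Variables (T : finType) (a : rel T).

Definition outdeg (S : {set T}) (v : T) : nat := #|[set y in S | a v y]|.
Definition indeg (S : {set T}) (v : T) : nat := #|[set y in S | a y v]|.

Definition dmin (S : {set T}) (v : T) : nat := minn (outdeg S v) (indeg S v).
Definition dmax (S : {set T}) (v : T) : nat := maxn (outdeg S v) (indeg S v).

Definition Delta_max : nat := \max_(v : T) dmax setT v.

Definition narcs (S : {set T}) : nat :=
  #|[set p : T * T | [&& p.1 \in S, p.2 \in S & a p.1 p.2]]|.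

Definition special (r : nat) (S : {set T}) : Prop :=
  forall v, v \in S -> dmin S v < r \/ (outdeg S v = r /\ indeg S v = r).

Definition normal_partition (r1 r2 : nat) (V1 V2 : {set T}) : Prop :=
  V2 = ~: V1 /\
  forall W : {set T},
    r2 * narcs V1 + r1 * narcs V2 <= r2 * narcs W + r1 * narcs (~: W).

End Digraph.

From mathcomp Require Import all_boot zify.
Set Implicit Arguments. Unset Strict Implicit. Unset Printing Implicit Defensive.

(* Let (V1, V2) be (r1,r2)-normal and let v in V1 have
   d_min(v) >= r1 in G[V1].  Moving v to V2 removes its o1 + i1 arcs to and
   from V1 and adds its o2 + i2 arcs to and from V2, so normality gives
   r2 (o1 + i1) <= r1 (o2 + i2).  Since the total degrees o1 + o2 and i1 + i2
   are at most Delta_max <= r1 + r2, this balance forces o1 = i1 = r1, i.e.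
   G[V1] is r1-special; the statement for V2 follows by symmetry. *)

Section ArcCounting.
Variables (T : finType) (a : rel T).
Hypothesis a_irr : irreflexive a.

Lemma narcs_setU1 (S : {set T}) (v : T) : v \notin S ->
  narcs a (v |: S) = narcs a S + outdeg a S v + indeg a S v.
Proof.
move=> vNS.
pose out_arcs := [set p : T * T | [&& p.1 == v, p.2 \in S & a p.1 p.2]].
pose in_arcs := [set p : T * T | [&& p.2 == v, p.1 \in S & a p.1 p.2]].
have card_out : #|out_arcs| = outdeg a S v.
  have from_v_inj : injective (pair v : T -> T * T) by move=> y y' [].
  rewrite /outdeg -(card_imset _ from_v_inj).
  apply: eq_card => -[x y]; rewrite !inE /=.
  apply/idP/imsetP => [/and3P[/eqP -> yS vy]|[z]]; first by exists y; rewrite ?inE ?yS.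
  by rewrite inE => /andP[zS vz] [-> ->]; rewrite eqxx zS.
have card_in : #|in_arcs| = indeg a S v.
  have to_v_inj : injective (fun y : T => (y, v)) by move=> y y' [].
  rewrite /indeg -(card_imset _ to_v_inj).
  apply: eq_card => -[x y]; rewrite !inE /=.
  apply/idP/imsetP => [/and3P[/eqP -> xS xv]|[z]]; first by exists x; rewrite ?inE ?xS.
  by rewrite inE => /andP[zS zv] [-> ->]; rewrite eqxx zS.
have disjoint_cardU (A B : {set T * T}) : A :&: B = set0 -> #|A :|: B| = #|A| + #|B|.
  by move=> AB0; have := cardsUI A B; rewrite AB0 cards0 addn0.
rewrite /narcs -card_out -card_in -addnA -disjoint_cardU; last first.
  apply/setP => -[x y]; rewrite !inE /=.
  by case: (x =P v) => [->|_]; case: (y =P v) => [->|_] //=; rewrite ?(negbTE vNS) ?andbF.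
rewrite -disjoint_cardU; last first.
  apply/setP => -[x y]; rewrite !inE /=.
  by case: (x =P v) => [->|_]; case: (y =P v) => [->|_] //=; rewrite ?(negbTE vNS) ?andbF.
apply: eq_card => -[x y]; rewrite !inE /=.
by case: (x =P v) => [->|_]; case: (y =P v) => [->|_] //=;
  rewrite ?(negbTE vNS) ?a_irr ?andbF ?orbF //= ?andbT.
Qed.

(* Removing v itself does not change its degrees, as there are no loops. *)
Lemma outdeg_setD1 (S : {set T}) (v : T) : outdeg a (S :\ v) v = outdeg a S v.
Proof. by apply: eq_card => y; rewrite !inE; case: (y =P v) => [->|]; rewrite ?a_irr ?andbF. Qed.

Lemma indeg_setD1 (S : {set T}) (v : T) : indeg a (S :\ v) v = indeg a S v.
Proof. by apply: eq_card => y; rewrite !inE; case: (y =P v) => [->|]; rewrite ?a_irr ?andbF. Qed.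

End ArcCounting.

Section Degrees.
Variables (T : finType) (a : rel T).

Lemma outdeg_split (S : {set T}) (v : T) :
  outdeg a setT v = outdeg a S v + outdeg a (~: S) v.
Proof.
rewrite /outdeg -(cardsID S [set y in setT | a v y]).
by congr (_ + _); apply: eq_card => y; rewrite !inE andbC.
Qed.

Lemma indeg_split (S : {set T}) (v : T) :
  indeg a setT v = indeg a S v + indeg a (~: S) v.
Proof.
rewrite /indeg -(cardsID S [set y in setT | a y v]).
by congr (_ + _); apply: eq_card => y; rewrite !inE andbC.
Qed.

Lemma dmax_le_Delta (v : T) : dmax a setT v <= Delta_max a.
Proof. exact: (@leq_bigmax _ (fun v => dmax a setT v) v). Qed.

Lemma outdeg_le_Delta (v : T) : outdeg a setT v <= Delta_max a.
Proof. exact: leq_trans (leq_maxl _ _) (dmax_le_Delta v). Qed.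

Lemma indeg_le_Delta (v : T) : indeg a setT v <= Delta_max a.
Proof. exact: leq_trans (leq_maxr _ _) (dmax_le_Delta v). Qed.

End Degrees.

(* Indeed
   (r1 + r2)(o1 + i1) <= r1 (o1 + o2 + i1 + i2) <= 2 r1 (r1 + r2). *)
Lemma balanced_degrees (r1 r2 o1 i1 o2 i2 : nat) : 0 < r1 ->
  r1 <= o1 -> r1 <= i1 -> o1 + o2 <= r1 + r2 -> i1 + i2 <= r1 + r2 ->
  r2 * (o1 + i1) <= r1 * (o2 + i2) ->
  o1 = r1 /\ i1 = r1.
Proof.
move=> r1_gt0 r1_o1 r1_i1 o_le i_le no_gain.
have sum_le : o1 + i1 <= 2 * r1 by nia.
lia.
Qed.

Section OptimalSide.
Variables (T : finType) (a : rel T).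
Hypothesis a_irr : irreflexive a.

(* If no partition W has smaller weighted cost than (V1, ~: V1), then G[V1]
   is r1-special: compare with W = V1 minus a vertex v of large d_min. *)
Lemma special_of_optimal_side (r1 r2 : nat) (V1 : {set T}) :
  0 < r1 -> Delta_max a <= r1 + r2 ->
  (forall W : {set T}, r2 * narcs a V1 + r1 * narcs a (~: V1)
                       <= r2 * narcs a W + r1 * narcs a (~: W)) ->
  special a r1 V1.
Proof.
move=> r1_gt0 Delta_le optimal v vV1.
have vNV1v : v \notin V1 :\ v by rewrite !inE eqxx.
have vNCV1 : v \notin ~: V1 by rewrite inE vV1.
have CV1v : ~: (V1 :\ v) = v |: ~: V1.
  by apply/setP => y; rewrite !inE negb_and negbK.
have no_gain : r2 * (outdeg a V1 v + indeg a V1 v)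
               <= r1 * (outdeg a (~: V1) v + indeg a (~: V1) v).
  have := optimal (V1 :\ v).
  by rewrite CV1v -{1}(setD1K vV1) !narcs_setU1 // outdeg_setD1 // indeg_setD1 //; nia.
have o_le := leq_trans (outdeg_le_Delta a v) Delta_le.
have i_le := leq_trans (indeg_le_Delta a v) Delta_le.
rewrite (outdeg_split a V1) in o_le; rewrite (indeg_split a V1) in i_le.
case: (ltnP (dmin a V1 v) r1) => [|]; first by left.
rewrite leq_min => /andP[r1_o1 r1_i1]; right.
exact: balanced_degrees r1_gt0 r1_o1 r1_i1 o_le i_le no_gain.
Qed.

End OptimalSide.

Theorem mainTheorem7 (T : finType) (a : rel T) (r1 r2 : nat)
    (V1 V2 : {set T}) :
  irreflexive a ->
  0 < r1 -> 0 < r2 ->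
  1 <= Delta_max a -> Delta_max a <= r1 + r2 ->
  normal_partition a r1 r2 V1 V2 ->
  special a r1 V1 /\ special a r2 V2.
Proof.
move=> a_irr r1_gt0 r2_gt0 _ Delta_le [-> optimal]; split.
  exact: (special_of_optimal_side a_irr r1_gt0 Delta_le optimal).
(* The side V2 = ~: V1 is optimal for the swapped weights (r2, r1). *)
apply: (special_of_optimal_side a_irr r2_gt0 (r2 := r1)); first by rewrite addnC.
move=> W; rewrite setCK addnC [X in _ <= X]addnC.
by have := optimal (~: W); rewrite setCK.
Qed.
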